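(* Let $s$ be a Lucasian GNS on a ring $D$. Then for all $a\in\mathbf N$ and $b\ge1$, \[ \tilde s_b(a)\equiv a\bmod s(b), \] where $\tilde s_b(a)=s(ab)/s(b)$.
   Context: A generalized $n$-series (GNS) over a ring $D$ is a function $s\colon\mathbf N\to D$ with $s(0)=0$, $s(n)$ a non-zero-divisor for $n>0$, and $s(n-k)\mid s(n)-s(k)$ for $n>k>0$. It is Lucasian if $s(a+b)\equiv s(a)+s(b)\bmod s(a)s(b)$ for all $a,b$. The rescaled GNS is $s_b(n)=s(bn)$ and the reduction of a GNS $t$ is $\tilde t(n)=t(n)/t(1)$; so $\tilde s_b(a)=s(ab)/s(b)$. *)

From mathcomp Require Import all_boot all_algebra.
Set Implicit Arguments. Unset Strict Implicit. Unset Printing Implicit Defensive.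
Import GRing.Theory.
Local Open Scope ring_scope.

Definition rdvd (D : comNzRingType) (x y : D) : Prop := exists c : D, y = c * x.

(* x is a non-zero-divisor (D commutative, so one-sided suffices). *)
Definition nzd (D : comNzRingType) (x : D) : Prop := forall y : D, x * y = 0 -> y = 0.

Definition is_GNS (D : comNzRingType) (s : nat -> D) : Prop :=
  [/\ s 0%N = 0,
      (forall n : nat, (0 < n)%N -> nzd (s n)) &
      (forall n k : nat, (0 < k)%N -> (k < n)%N -> rdvd (s (n - k)%N) (s n - s k))].

Definition lucasian (D : comNzRingType) (s : nat -> D) : Prop :=
  forall a b : nat, rdvd (s a * s b) (s (a + b)%N - (s a + s b)).

From mathcomp Require Import all_boot all_algebra.
From mathcomp Require Import ring.
Local Open Scope ring_scope.
Import GRing.Theory.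

(* Induction on a: the Lucasian congruence applied to a*b and b gives
   s((a+1)b) = s(ab) + s(b) + d s(ab) s(b), so if s(ab) = q s(b) then
   s((a+1)b) = (q + 1 + d q s(b)) s(b), and the new quotient is q + 1 mod s(b). *)

Lemma nzd_mulIr (D : comNzRingType) (x q1 q2 : D) :
  nzd x -> q1 * x = q2 * x -> q1 = q2.
Proof.
move=> x_nzd eq_q; apply/eqP; rewrite -subr_eq0; apply/eqP; apply: x_nzd.
by rewrite mulrBr ![x * _]mulrC eq_q subrr.
Qed.

Section LucasianQuotient.

Variables (D : comNzRingType) (s : nat -> D).
Hypotheses (s0 : s 0%N = 0) (s_lucasian : lucasian s).

Lemma lucasian_addE (m n : nat) :
  exists d : D, s (m + n)%N = s m + s n + d * s m * s n.
Proof.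
have [d hd] := s_lucasian m n.
by exists d; rewrite -mulrA -hd; ring.
Qed.

Lemma lucasian_mul_quotient (a b : nat) :
  exists2 q : D, s (a * b)%N = q * s b & rdvd (s b) (q - a%:R).
Proof.
elim: a => [|a [q sab [c q_mod]]].
  by exists 0; rewrite ?mul0n ?s0 ?mul0r //; exists 0; rewrite subrr mul0r.
have [d sSab] := lucasian_addE (a * b) b.
exists (q + 1 + d * q * s b).
  by rewrite mulSnr sSab sab; ring.
exists (c + d * q).
have -> : q = c * s b + a%:R by rewrite -q_mod; ring.
by rewrite -addn1 natrD; ring.
Qed.

End LucasianQuotient.

Theorem lemma5p11 (D : comNzRingType) (s : nat -> D) :
  is_GNS s -> lucasian s ->
  forall a b : nat, (1 <= b)%N ->
    (exists q : D, s (a * b)%N = q * s b) /\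
    (forall q : D, s (a * b)%N = q * s b -> rdvd (s b) (q - a%:R)).
Proof.
move=> [s0 s_nzd _] s_lucasian a b b_gt0.
have [q0 sab q0_mod] := @lucasian_mul_quotient D s s0 s_lucasian a b.
split; first by exists q0.
move=> q sab'.
have -> : q = q0 by apply: (@nzd_mulIr _ _ _ _ (s_nzd b b_gt0)); rewrite -sab -sab'.
exact: q0_mod.
Qed.
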